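(* Let $\rho=(r,U)$ be a universally quantified rule, let $(\pi\colon L\to\overline L,\gamma\colon\overline L\rightharpoonup\overline R)$ be an instantiation of $\rho$, let $u\in U$ and let $(\pi,\gamma)\oplus u=(p_u'\circ\pi,\eta)$ with $\eta\colon\overline L_u\rightharpoonup\overline R_u$. Then there exist subgraph morphisms $\mu_u'\colon\overline L_u\rightharpoonup\overline L$ and $\mu_u''\colon\overline R_u\rightharpoonup\overline R$ such that $\gamma\circ\mu_u'=\mu_u''\circ\eta$.
   Context: Fix a finite label set $\Lambda$ with arity function $\mathrm{ar}\colon\Lambda\to\mathbb N$. A (hyper)graph $G=(V_G,E_G,c_G,l_G)$ consists of finite sets $V_G$ (nodes) and $E_G$ (edges), a connection function $c_G\colon E_G\to V_G^*$ and a labelling $l_G\colon E_G\to\Lambda$ with $|c_G(e)|=\mathrm{ar}(l_G(e))$; an edge $e$ is incident to a node $v$ if $v$ occurs in $c_G(e)$. A morphism $\phi\colon G\rightharpoonup G'$ is a pair of partial functions $\phi_V,\phi_E$ such that whenever $\phi_E(e)$ is defined, $\phi_V$ is defined on all nodes incident to $e$, $l_{G'}(\phi_E(e))=l_G(e)$ and $\phi_V(c_G(e))=c_{G'}(\phi_E(e))$. ''Total'' means defined everywhere. Pushouts are taken in the category of graphs and partial morphisms (always exist, unique up to isomorphism; concretely: quotient of $G_1\sqcup G_2$ by the smallest equivalence identifying $\phi(x)$ and $\psi(x)$ for $x\in G_0$, dropping classes containing the image of an $x\in G_0$ on which $\phi$ or $\psi$ is undefined and edge classes incident to dropped node classes).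 A subgraph morphism is a morphism that is injective and surjective (as partial functions on nodes and edges). A universally quantified rule is $\rho=(r,U)$ with $r\colon L\rightharpoonup R$ and $U$ a finite set of pairs $u=(p_u,q_u)$, $p_u\colon L\to L_u$ total injective, $q_u\colon L_u\rightharpoonup R_u$, such that for every $x\in L$, $q_u(p_u(x))$ is defined and has exactly one preimage under $q_u$; $Q(u)$ is the set of $v\in V_L$ such that some edge incident to $p_u(v)$ has no preimage under $p_u$, required nonempty. Instantiations $(\pi\colon L\to\overline L$ total injective, $\gamma\colon\overline L\rightharpoonup\overline R)$ are defined recursively: $(\mathrm{id}_L,r)$ is one (length 0); if $(\pi,\gamma)$ is one of length $n$ and $u\in U$, let $\overline L_u$ with $p_u'\colon\overline L\to\overline L_u$, $\pi'\colon L_u\to\overline L_u$ be the pushout of $\pi,p_u$, let $\overline R_u$ with $\alpha\colon\overline R\rightharpoonup\overline R_u$, $\beta\colon R_u\rightharpoonup\overline R_u$ be the pushout of $\gamma\circ\pi$ and $q_u\circ p_u$, and $\eta\colon\overline L_u\rightharpoonup\overline R_u$ the unique morphism with $\eta\circ p_u'=\alpha\circ\gamma$, $\eta\circ\pi'=\beta\circ q_u$; then $(\pi,\gamma)\oplus u:=(p_u'\circ\pi,\eta)$ is an instantiation of length $n+1$. *)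

From mathcomp Require Import all_boot.
From Stdlib Require List.
Set Implicit Arguments.
Unset Strict Implicit.
Unset Printing Implicit Defensive.

Section Graphs.
Variables (Lab : finType) (ar : Lab -> nat).

Record graph := Graph {
  V : finType;
  E : finType;
  conn : E -> seq V;
  lab : E -> Lab;
  conn_ar : forall e, size (conn e) = ar (lab e) }.

(** Partial morphisms: partial maps on nodes and edges such that whenever the
    edge map is defined on [e], the node map is defined on all nodes incident
    to [e], labels are preserved and connections are mapped to connections. *)
Record morph (G H : graph) := Morph {
  mV : V G -> option (V H);
  mE : E G -> option (E H);
  mok : forall e e', mE e = Some e' ->
          lab e' = lab e /\ map mV (conn e) = map Some (conn e') }.

Definition idm (G : graph) : morph G G.
Proof.
refine (@Morph G G (fun v => Some v) (fun e => Some e) _).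
by move=> e e' [<-]; split.
Defined.

Lemma comp_ok (G H K : graph) (g : morph H K) (f : morph G H) :
  forall e e'', obind (mE g) (mE f e) = Some e'' ->
    lab e'' = lab e /\
    map (fun v => obind (mV g) (mV f v)) (conn e) = map Some (conn e'').
Proof.
move=> e e''; case Hf: (mE f e) => [e'|] //= Hg.
have [l1 c1] := mok Hf; have [l2 c2] := mok Hg.
split; first by rewrite l2 l1.
have -> : (fun v => obind (mV g) (mV f v)) = obind (mV g) \o mV f by [].
by rewrite map_comp c1 -map_comp.
Qed.

Definition mcomp (G H K : graph) (g : morph H K) (f : morph G H) : morph G K :=
  @Morph G K (fun v => obind (mV g) (mV f v))
             (fun e => obind (mE g) (mE f e)) (@comp_ok G H K g f).

Definition meq (G H : graph) (f g : morph G H) : Prop :=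
  (forall v, mV f v = mV g v) /\ (forall e, mE f e = mE g e).

Definition total (G H : graph) (f : morph G H) : Prop :=
  (forall v, mV f v <> None) /\ (forall e, mE f e <> None).

Definition injectivem (G H : graph) (f : morph G H) : Prop :=
  (forall v w z, mV f v = Some z -> mV f w = Some z -> v = w) /\
  (forall e d z, mE f e = Some z -> mE f d = Some z -> e = d).

Definition surjectivem (G H : graph) (f : morph G H) : Prop :=
  (forall z, exists v, mV f v = Some z) /\ (forall z, exists e, mE f e = Some z).

Definition subgraph_morph (G H : graph) (f : morph G H) : Prop :=
  injectivem f /\ surjectivem f.

Definition is_pushout (G0 G1 G2 P : graph) (f : morph G0 G1) (g : morph G0 G2)
    (a : morph G1 P) (b : morph G2 P) : Prop :=
  meq (mcomp a f) (mcomp b g) /\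
  forall (Q : graph) (a' : morph G1 Q) (b' : morph G2 Q),
    meq (mcomp a' f) (mcomp b' g) ->
    (exists h : morph P Q, meq (mcomp h a) a' /\ meq (mcomp h b) b') /\
    (forall h h' : morph P Q,
        meq (mcomp h a) a' -> meq (mcomp h b) b' ->
        meq (mcomp h' a) a' -> meq (mcomp h' b) b' -> meq h h').

Record ucomp (L : graph) := UComp {
  uL : graph;
  uR : graph;
  up : morph L uL;
  uq : morph uL uR }.

(** A rule candidate rho = (r : L -> R, U), U a finite set (list) of components. *)
Record rule := Rule {
  rL : graph;
  rR : graph;
  rr : morph rL rR;
  rU : seq (ucomp rL) }.

Definition Qset (L : graph) (u : ucomp L) (v : V L) : Prop :=
  exists (e : E (uL u)) (w : V (uL u)),
    mV (up u) v = Some w /\ w \in conn e /\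
    (forall e0 : E L, mE (up u) e0 <> Some e).

Definition uq_component (L : graph) (u : ucomp L) : Prop :=
  total (up u) /\ injectivem (up u) /\
  (forall v : V L, exists w y, mV (up u) v = Some w /\ mV (uq u) w = Some y /\
                     forall z, mV (uq u) z = Some y -> z = w) /\
  (forall e : E L, exists d y, mE (up u) e = Some d /\ mE (uq u) d = Some y /\
                     forall z, mE (uq u) z = Some y -> z = d) /\
  (exists v, Qset u v).

Definition uq_rule (rho : rule) : Prop :=
  forall u, List.In u (rU rho) -> uq_component u.

(** Instantiations (pi : L -> Lbar, gamma : Lbar -> Rbar) of rho. Pushouts are
    any pushouts (they are unique up to isomorphism). *)
Inductive instantiation (rho : rule) :
    forall (Lb Rb : graph), morph (rL rho) Lb -> morph Lb Rb -> Prop :=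
| inst0 : instantiation (idm (rL rho)) (rr rho)
| instS : forall (Lb Rb : graph) (pi : morph (rL rho) Lb) (gamma : morph Lb Rb)
    (u : ucomp (rL rho)) (Lbu Rbu : graph)
    (pu' : morph Lb Lbu) (pi' : morph (uL u) Lbu)
    (alpha : morph Rb Rbu) (beta : morph (uR u) Rbu) (eta : morph Lbu Rbu),
    instantiation pi gamma ->
    List.In u (rU rho) ->
    is_pushout pi (up u) pu' pi' ->
    is_pushout (mcomp gamma pi) (mcomp (uq u) (up u)) alpha beta ->
    meq (mcomp eta pu') (mcomp alpha gamma) ->
    meq (mcomp eta pi') (mcomp beta (uq u)) ->
    instantiation (mcomp pu' pi) eta.

End Graphs.

(* Since p_u is total and injective, the cocone (id, pi o p_u^-1) over the
   pushout of pi and p_u yields mu' : Lbar_u -> Lbar with mu' o p_u' = id; as the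
   legs of a pushout are jointly surjective, mu' is then injective and surjective.
   The unique-preimage condition on q_u makes q_u o p_u total and injective too,
   which gives mu'' in the same way.  Finally gamma o mu' and mu'' o eta agree on
   both legs of the first pushout, hence coincide. *)

From Pilot Require Import Defs.
From mathcomp Require Import all_boot.
From Stdlib Require List.
From Stdlib Require Import Setoid Morphisms.
Set Implicit Arguments.
Unset Strict Implicit.
Unset Printing Implicit Defensive.

Lemma obindA (A B C : Type) (f : A -> option B) (g : B -> option C) o :
  obind (fun x => obind g (f x)) o = obind g (obind f o).
Proof. by case: o. Qed.

Section PartialFunctions.
Variables (A : finType) (B C : eqType).

Definition pinjective (k : A -> option B) : Prop :=
  forall x y z, k x = Some z -> k y = Some z -> x = y.

Definition preim (k : A -> option B) (y : B) : option A :=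
  [pick x | k x == Some y].

Lemma preim_some k y x : preim k y = Some x -> k x = Some y.
Proof. by rewrite /preim; case: pickP => // x' /eqP H [<-]. Qed.

Lemma preim_none k y : (forall x, k x <> Some y) -> preim k y = None.
Proof. by move=> H; rewrite /preim; case: pickP => // x /eqP /H. Qed.

Lemma preim_image k x y : pinjective k -> k x = Some y -> preim k y = Some x.
Proof.
move=> Hk Hy; rewrite /preim; case: pickP => [x' /eqP Hx'|/(_ x)].
  by rewrite (Hk _ _ _ Hx' Hy).
by rewrite Hy eqxx.
Qed.

Definition pextend (f : A -> option C) (k : A -> option B) (y : B) : option C :=
  obind f (preim k y).

Lemma pextendK f k x :
  pinjective k -> k x <> None -> obind (pextend f k) (k x) = f x.
Proof.
move=> Hk; case Hx: (k x) => [y|] // _.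
by rewrite /pextend /= (preim_image Hk Hx).
Qed.

End PartialFunctions.

Section UniquePreimage.
Variables (A B : finType) (C D : eqType).
Variables (p : A -> option B) (q : B -> option C).
Hypothesis p_inj : pinjective p.
Hypothesis q_unique : forall x, exists w y,
  p x = Some w /\ q w = Some y /\ forall z, q z = Some y -> z = w.

Lemma obind_total : forall x, obind q (p x) <> None.
Proof. by move=> x; have [w [y [-> [/= -> _]]]] := q_unique x. Qed.

Lemma obind_pinjective : pinjective (fun x => obind q (p x)).
Proof.
move=> x1 x2 y; case H1: (p x1) => [w1|] //= Hq1.
case H2: (p x2) => [w2|] //= Hq2.
have [w [y' [Hw [Hy Huniq]]]] := q_unique x1.
move: Hw Hy Huniq; rewrite H1 => -[<-]; rewrite Hq1 => -[<-] Huniq.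
by apply: p_inj H1 _; rewrite H2 (Huniq _ Hq2).
Qed.

(* The only [q]-preimage of a point in the image of [q \o p] lies in the image
   of [p], so transporting along [q \o p] and then pulling back along [q] is
   the same as transporting along [p]. *)
Lemma pextend_obind (f : A -> option D) z :
  obind (pextend f (fun x => obind q (p x))) (q z) = pextend f p z.
Proof.
rewrite /pextend; case Hq: (q z) => [y|] /=.
- case Hp: (preim p z) => [x|] /=.
    by rewrite (@preim_image _ _ _ x y obind_pinjective) // (preim_some Hp).
  rewrite preim_none // => x; case Hx: (p x) => [w|] //= Hw.
  have [w' [y' [Hw' [Hy' Huniq]]]] := q_unique x.
  move: Hw' Hy' Huniq; rewrite Hx => -[<-]; rewrite Hw => -[<-] Huniq.
  by move: Hp; rewrite (preim_image p_inj (_ : p x = Some z)) // Hx (Huniq _ Hq).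
- case Hp: (preim p z) => [x|] //=.
  have [w [y [Hw [Hy _]]]] := q_unique x.
  by move: Hw Hy; rewrite (preim_some Hp) => -[<-]; rewrite Hq.
Qed.

End UniquePreimage.

Lemma pushout_section (X0 X1 X2 Y : finType) (f : X0 -> option X1)
    (g : X0 -> option X2) (a : X1 -> option Y) (b : X2 -> option Y)
    (mu : Y -> option X1) :
  (forall x, obind a (f x) = obind b (g x)) ->
  (forall y, (exists x, a x = Some y) \/ (exists x, b x = Some y)) ->
  (forall x, obind mu (a x) = Some x) ->
  (forall x, obind mu (b x) = pextend f g x) ->
  forall y x, mu y = Some x -> a x = Some y.
Proof.
move=> comm joint Ha Hb y x Hx; case: (joint y) => [[x' Hx']|[x' Hx']].
  by move: (Ha x'); rewrite Hx' /= Hx => -[->].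
move: (Hb x'); rewrite Hx' /= Hx /pextend.
case Hp: (preim g x') => [x0|] //= Hf.
by move: (comm x0); rewrite -Hf (preim_some Hp) /= Hx'.
Qed.

Section Graphs.
Variables (Lab : finType) (ar : Lab -> nat).
Local Notation graph := (graph ar).

Lemma meq_refl (G H : graph) (f : morph G H) : meq f f.
Proof. by []. Qed.

Lemma meq_sym (G H : graph) (f g : morph G H) : meq f g -> meq g f.
Proof. by case=> HV HE; split. Qed.

Lemma meq_trans (G H : graph) (f g h : morph G H) :
  meq f g -> meq g h -> meq f h.
Proof. by case=> HV HE [HV' HE']; split=> x; rewrite HV HV' || rewrite HE HE'. Qed.

#[global] Add Parametric Relation (G H : graph) : (morph G H) (@meq _ _ G H)
  reflexivity proved by (@meq_refl G H)
  symmetry proved by (@meq_sym G H)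
  transitivity proved by (@meq_trans G H) as meq_rel.

Lemma mcomp_meq (G H K : graph) (g g' : morph H K) (f f' : morph G H) :
  meq g g' -> meq f f' -> meq (mcomp g f) (mcomp g' f').
Proof.
by case=> gV gE [fV fE]; split=> x /=;
  [rewrite fV; case: (mV f' x) | rewrite fE; case: (mE f' x)].
Qed.

#[global] Add Parametric Morphism (G H K : graph) : (@mcomp _ _ G H K)
  with signature @meq _ _ H K ==> @meq _ _ G H ==> @meq _ _ G K as mcomp_mor.
Proof. by move=> g g' Hg f f' Hf; apply: mcomp_meq. Qed.

Lemma mcompA (G H K M : graph) (h : morph K M) (g : morph H K) (f : morph G H) :
  meq (mcomp h (mcomp g f)) (mcomp (mcomp h g) f).
Proof. by split=> x /=; rewrite obindA. Qed.

Lemma mcomp1m (G H : graph) (f : morph G H) : meq (mcomp (idm H) f) f.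
Proof. by split=> x /=; [case: (mV f x) | case: (mE f x)]. Qed.

Lemma mcompm1 (G H : graph) (f : morph G H) : meq (mcomp f (idm G)) f.
Proof. by []. Qed.

Lemma pushout_mediator_unique (G0 G1 G2 P Q : graph) (f : morph G0 G1)
    (g : morph G0 G2) (a : morph G1 P) (b : morph G2 P) (h h' : morph P Q) :
  is_pushout f g a b ->
  meq (mcomp h a) (mcomp h' a) -> meq (mcomp h b) (mcomp h' b) -> meq h h'.
Proof.
move=> [comm univ] Ha Hb.
have cocone : meq (mcomp (mcomp h' a) f) (mcomp (mcomp h' b) g).
  by rewrite -!mcompA comm.
by apply: (univ _ _ _ cocone).2.
Qed.

Lemma conn_image (G H : graph) (m : morph G H) x e v :
  mE m x = Some e -> v \in conn e -> exists2 w, w \in conn x & mV m w = Some v.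
Proof.
move=> /mok [_ Hconn] /(map_f Some); rewrite -Hconn => /mapP [w Hw Hmw].
by exists w.
Qed.

Section Subgraph.
Variables (P : graph) (PV : pred (V P)) (PE : pred (E P)).
Hypothesis PE_closed : forall e, PE e -> all PV (conn e).

Local Notation VS := {v : V P | PV v}.
Local Notation ES := {e : E P | PE e}.

Lemma map_insub (s : seq (V P)) :
  all PV s -> map Some (pmap (insub : V P -> option VS) s) = map insub s.
Proof.
elim: s => //= v s IH /andP [Hv Hs].
by case: (insubP VS v) => [w _ _|]; [rewrite /= IH | rewrite Hv].
Qed.

Lemma subgraph_conn_ar (e : ES) :
  size (pmap (insub : V P -> option VS) (conn (val e))) = ar (lab (val e)).
Proof.
by rewrite -(size_map Some) map_insub ?size_map ?conn_ar // PE_closed ?(valP e).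
Qed.

Definition subgraph : graph :=
  @Graph Lab ar VS ES (fun e => pmap insub (conn (val e))) (fun e => lab (val e))
    subgraph_conn_ar.

Definition subgraph_incl : morph subgraph P.
Proof.
refine (@Morph _ _ subgraph P (fun v => Some (val v)) (fun e => Some (val e)) _).
move=> e _ [<-]; split=> //=.
elim: (conn (val e)) (PE_closed (valP e)) => //= v s IH /andP [Hv Hs].
by case: (insubP VS v) => [w _ Hw|]; [rewrite /= Hw IH | rewrite Hv].
Defined.

Definition subgraph_restr (G : graph) (m : morph G P) : morph G subgraph.
Proof.
refine (@Morph _ _ G subgraph (fun x => obind insub (mV m x))
          (fun x => obind insub (mE m x)) _).
move=> x e'; case Hm: (mE m x) => [e|] //=.
case: (insubP ES e) => // e0 He0 He0e [<-].
have [Hlab Hconn] := mok Hm.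
split; first by rewrite /= He0e.
rewrite /= (map_comp (obind insub) (mV m)) Hconn He0e map_insub ?PE_closed //.
by rewrite -map_comp.
Defined.

Lemma subgraph_incl_restr (G : graph) (m : morph G P) :
  (forall x v, mV m x = Some v -> PV v) -> (forall x e, mE m x = Some e -> PE e) ->
  meq (mcomp subgraph_incl (subgraph_restr m)) m.
Proof.
move=> HV HE; split=> x /=.
- case Hx: (mV m x) => [v|] //=; have := HV _ _ Hx.
  by case: (insubP VS v) => [w _ <- | /negP].
- case Hx: (mE m x) => [e|] //=; have := HE _ _ Hx.
  by case: (insubP ES e) => [d _ <- | /negP].
Qed.

End Subgraph.

Lemma pushout_jointly_surjective (G0 G1 G2 P : graph) (f : morph G0 G1)
    (g : morph G0 G2) (a : morph G1 P) (b : morph G2 P) :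
  is_pushout f g a b ->
  (forall v, (exists x, mV a x = Some v) \/ (exists x, mV b x = Some v)) /\
  (forall e, (exists x, mE a x = Some e) \/ (exists x, mE b x = Some e)).
Proof.
move=> Hpo; have [comm univ] := Hpo.
pose PV v := [exists x, mV a x == Some v] || [exists x, mV b x == Some v].
pose PE e := [exists x, mE a x == Some e] || [exists x, mE b x == Some e].
have PE_closed e : PE e -> all PV (conn e).
  case/orP=> /existsP [x /eqP Hx]; apply/allP=> v /(conn_image Hx) [w _ Hw];
    apply/orP; [left|right]; apply/existsP; exists w; exact/eqP.
pose i := subgraph_incl PE_closed.
have Ha : meq (mcomp i (subgraph_restr PE_closed a)) a.
  by apply: subgraph_incl_restr => x ? Hx; apply/orP; left;
    apply/existsP; exists x; rewrite Hx.
have Hb : meq (mcomp i (subgraph_restr PE_closed b)) b.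
  by apply: subgraph_incl_restr => x ? Hx; apply/orP; right;
    apply/existsP; exists x; rewrite Hx.
have cocone : meq (mcomp (subgraph_restr PE_closed a) f)
                  (mcomp (subgraph_restr PE_closed b) g).
  by split=> x; rewrite /= !obindA; [have := comm.1 x | have := comm.2 x] => /= ->.
have [[h [Hha Hhb]] _] := univ _ _ _ cocone.
have [HV HE] : meq (mcomp i h) (idm P).
  apply: (pushout_mediator_unique Hpo).
  - by rewrite -mcompA Hha Ha mcomp1m.
  - by rewrite -mcompA Hhb Hb mcomp1m.
split=> [v|e].
- move: (HV v) => /=; case: (mV h v) => // s [<-].
  by case/orP: (valP s) => /existsP [x /eqP Hx]; [left|right]; exists x.
- move: (HE e) => /=; case: (mE h e) => // s [<-].
  by case/orP: (valP s) => /existsP [x /eqP Hx]; [left|right]; exists x.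
Qed.

Section Extend.
Variables (G0 G1 G2 : graph) (k : morph G0 G2) (f : morph G0 G1).
Hypothesis k_inj : injectivem k.

Lemma map_pextend (s : seq (V G0)) (t : seq (V G2)) :
  map (mV k) s = map Some t -> map (pextend (mV f) (mV k)) t = map (mV f) s.
Proof.
elim: s t => [|x s IH] [|y t] //= [Hxy Hst].
by rewrite /pextend (preim_image k_inj.1 Hxy) (IH _ Hst).
Qed.

Lemma extend_ok d e : pextend (mE f) (mE k) d = Some e ->
  lab e = lab d /\ map (pextend (mV f) (mV k)) (conn d) = map Some (conn e).
Proof.
rewrite /pextend; case Hd: (preim (mE k) d) => [x|] //= Hfx.
have [lab_k conn_k] := mok (preim_some Hd); have [lab_f conn_f] := mok Hfx.
by rewrite lab_f lab_k (map_pextend conn_k).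
Qed.

Definition extend : morph G2 G1 :=
  @Morph _ _ G2 G1 (pextend (mV f) (mV k)) (pextend (mE f) (mE k)) extend_ok.

Lemma extendK : Defs.total k -> meq (mcomp extend k) f.
Proof.
by case=> kV kE; split=> x /=; apply: pextendK; [case: k_inj | | case: k_inj |].
Qed.

End Extend.

Lemma mcomp_extend (G0 G1 G2 H : graph) (k : morph G0 G2) (f : morph G0 G1)
    (h : morph G1 H) (k_inj : injectivem k) :
  meq (mcomp h (extend f k_inj)) (extend (mcomp h f) k_inj).
Proof. by split=> y /=; rewrite /pextend obindA. Qed.

Lemma pushout_retraction (G0 G1 G2 P : graph) (f : morph G0 G1)
    (g : morph G0 G2) (a : morph G1 P) (b : morph G2 P)
    (g_tot : Defs.total g) (g_inj : injectivem g) :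
  is_pushout f g a b ->
  exists mu : morph P G1, meq (mcomp mu a) (idm G1) /\
    meq (mcomp mu b) (extend f g_inj) /\ subgraph_morph mu.
Proof.
move=> Hpo; have [comm univ] := Hpo.
have [jointV jointE] := pushout_jointly_surjective Hpo.
have cocone : meq (mcomp (idm G1) f) (mcomp (extend f g_inj) g).
  by rewrite mcomp1m extendK.
have [[mu [Ha Hb]] _] := univ _ _ _ cocone.
exists mu; do 2!split=> //.
have sectV := pushout_section comm.1 jointV Ha.1 Hb.1.
have sectE := pushout_section comm.2 jointE Ha.2 Hb.2.
split; split.
- by move=> v w x /sectV Hv /sectV; rewrite Hv => -[].
- by move=> v w x /sectE Hv /sectE; rewrite Hv => -[].
- by move=> x; move: (Ha.1 x) => /=; case: (mV a x) => // v; exists v.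
- by move=> x; move: (Ha.2 x) => /=; case: (mE a x) => // e; exists e.
Qed.

Section UniquePreimageMorph.
Variables (G0 G1 G2 : graph) (p : morph G0 G1) (q : morph G1 G2).
Hypothesis p_inj : injectivem p.
Hypothesis qV_unique : forall v, exists w y,
  mV p v = Some w /\ mV q w = Some y /\ forall z, mV q z = Some y -> z = w.
Hypothesis qE_unique : forall e, exists d y,
  mE p e = Some d /\ mE q d = Some y /\ forall z, mE q z = Some y -> z = d.

Lemma mcomp_total : Defs.total (mcomp q p).
Proof. by split=> x; apply: obind_total. Qed.

Lemma mcomp_injective : injectivem (mcomp q p).
Proof. by split; apply: obind_pinjective; case: p_inj. Qed.

Lemma extend_mcomp (H : graph) (f : morph G0 H)
    (qp_inj : injectivem (mcomp q p)) :
  meq (mcomp (extend f qp_inj) q) (extend f p_inj).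
Proof. by split=> x /=; apply: pextend_obind; case: p_inj. Qed.

End UniquePreimageMorph.

End Graphs.

Theorem mainTheorem2 (Lab : finType) (ar : Lab -> nat) (rho : rule ar)
    (Hrho : uq_rule rho)
    (Lb Rb : graph ar) (pi : morph (rL rho) Lb) (gamma : morph Lb Rb)
    (Hinst : instantiation pi gamma)
    (u : ucomp (rL rho)) (Hu : List.In u (rU rho))
    (Lbu Rbu : graph ar) (pu' : morph Lb Lbu) (pi' : morph (uL u) Lbu)
    (Hpo1 : is_pushout pi (up u) pu' pi')
    (alpha : morph Rb Rbu) (beta : morph (uR u) Rbu)
    (Hpo2 : is_pushout (mcomp gamma pi) (mcomp (uq u) (up u)) alpha beta)
    (eta : morph Lbu Rbu)
    (Heta1 : meq (mcomp eta pu') (mcomp alpha gamma))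
    (Heta2 : meq (mcomp eta pi') (mcomp beta (uq u))) :
  exists (mu1 : morph Lbu Lb) (mu2 : morph Rbu Rb),
    subgraph_morph mu1 /\ subgraph_morph mu2 /\
    meq (mcomp gamma mu1) (mcomp mu2 eta).
Proof.
have [p_tot [p_inj [qV_unique [qE_unique _]]]] := Hrho u Hu.
have k_tot := mcomp_total qV_unique qE_unique.
have k_inj := mcomp_injective p_inj qV_unique qE_unique.
have [mu1 [Ha1 [Hb1 sub1]]] := pushout_retraction p_tot p_inj Hpo1.
have [mu2 [Ha2 [Hb2 sub2]]] := pushout_retraction k_tot k_inj Hpo2.
exists mu1, mu2; do 2!split=> //.
apply: (pushout_mediator_unique Hpo1).
- by rewrite -!mcompA Ha1 Heta1 mcompA Ha2 mcompm1 mcomp1m.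
- by rewrite -!mcompA Hb1 Heta2 mcompA Hb2 mcomp_extend extend_mcomp.
Qed.
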